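(* Consider the system on the projected Kasner state space in the context and a solution with $\Sigma_A\Sigma_C\neq0$ initially. Then its $\alpha$-limit set is contained in the closed arc $\{\Sigma_A=\Sigma_C=0,\ \Sigma_+^2+\Sigma_B^2=1,\ -1\le\Sigma_+\le-\tfrac12,\ 0\le\Sigma_B\le\tfrac{\sqrt3}{2}\}$, and its $\omega$-limit set is contained in the closed arc $\{\Sigma_A=\Sigma_C=0,\ \Sigma_+^2+\Sigma_B^2=1,\ \tfrac12\le\Sigma_+\le1,\ -\tfrac{\sqrt3}{2}\le\Sigma_B\le0\}$.
   Context: The projected Kasner system is the ODE system for $(\Sigma_+,\Sigma_A,\Sigma_B,\Sigma_C)\in\mathbb R^4$ restricted to the invariant sphere $\Sigma_+^2+\Sigma_A^2+\Sigma_B^2+\Sigma_C^2=1$: $\Sigma_+'=3\Sigma_A^2$, $\Sigma_A'=-(3\Sigma_++\sqrt3\Sigma_B)\Sigma_A$, $\Sigma_B'=\sqrt3\Sigma_A^2-2\sqrt3\Sigma_C^2$, $\Sigma_C'=2\sqrt3\Sigma_B\Sigma_C$, where $'$ denotes $d/d\tau$, $\tau\in\mathbb R$. *)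

From Stdlib Require Import Reals Lra.
Open Scope R_scope.

Record state := mkState { Sp : R; SA : R; SB : R; SC : R }.

Definition on_sphere (x : state) : Prop :=
  Sp x ^ 2 + SA x ^ 2 + SB x ^ 2 + SC x ^ 2 = 1.

Definition kasner_field (x : state) : state :=
  mkState (3 * SA x ^ 2)
          (- (3 * Sp x + sqrt 3 * SB x) * SA x)
          (sqrt 3 * SA x ^ 2 - 2 * sqrt 3 * SC x ^ 2)
          (2 * sqrt 3 * SB x * SC x).

Definition is_solution (x : R -> state) : Prop :=
  (forall t, on_sphere (x t)) /\
  (forall t, derivable_pt_lim (fun s => Sp (x s)) t (Sp (kasner_field (x t)))) /\
  (forall t, derivable_pt_lim (fun s => SA (x s)) t (SA (kasner_field (x t)))) /\
  (forall t, derivable_pt_lim (fun s => SB (x s)) t (SB (kasner_field (x t)))) /\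
  (forall t, derivable_pt_lim (fun s => SC (x s)) t (SC (kasner_field (x t)))).

Definition state_cv (u : nat -> state) (p : state) : Prop :=
  Un_cv (fun n => Sp (u n)) (Sp p) /\ Un_cv (fun n => SA (u n)) (SA p) /\
  Un_cv (fun n => SB (u n)) (SB p) /\ Un_cv (fun n => SC (u n)) (SC p).

Definition omega_limit (x : R -> state) (p : state) : Prop :=
  exists t : nat -> R, cv_infty t /\ state_cv (fun n => x (t n)) p.

Definition alpha_limit (x : R -> state) (p : state) : Prop :=
  exists t : nat -> R, cv_infty (fun n => - t n) /\ state_cv (fun n => x (t n)) p.

Definition alpha_arc (p : state) : Prop :=
  SA p = 0 /\ SC p = 0 /\ Sp p ^ 2 + SB p ^ 2 = 1 /\
  -1 <= Sp p <= -1/2 /\ 0 <= SB p <= sqrt 3 / 2.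

Definition omega_arc (p : state) : Prop :=
  SA p = 0 /\ SC p = 0 /\ Sp p ^ 2 + SB p ^ 2 = 1 /\
  1/2 <= Sp p <= 1 /\ - (sqrt 3 / 2) <= SB p <= 0.

From Stdlib Require Import Reals Lra Psatz.
Open Scope R_scope.

(* The omega-limit set is located by monotonicity arguments along a solution
   with Sigma_A Sigma_C <> 0:
   - Sigma_A and Sigma_C satisfy linear equations, so they never vanish;
   - Sigma_+' = 3 Sigma_A^2 and (Sigma_+ - sqrt 3 Sigma_B)' = 6 Sigma_C^2, so both
     quantities are nondecreasing; converging along the sequence defining an
     omega-limit point, a Barbalat-type lemma forces Sigma_A, Sigma_C -> 0;
   - the sphere constraint and continuity then give Sigma_B -> Sigma_B(p);
   - if Sigma_B(p) > 0, resp. 3 Sigma_+(p) + sqrt 3 Sigma_B(p) < 0, then Sigma_C^2,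
     resp. Sigma_A^2, would eventually increase, contradicting its decay;
   - these two inequalities on the unit circle cut out the omega-arc.
   The alpha-limit set follows by time reversal t |-> -t combined with the
   reflection (Sigma_+, Sigma_B) |-> (-Sigma_+, -Sigma_B), which preserves the
   system and maps the omega-arc onto the alpha-arc. *)

Definition derivable_of_lim (f d : R -> R)
  (Hd : forall t, derivable_pt_lim f t (d t)) : derivable f :=
  fun t => exist (fun l => derivable_pt_abs f t l) (d t) (Hd t).

Lemma increment_le (f d : R -> R) (k a b : R) :
  (forall t, derivable_pt_lim f t (d t)) -> a <= b ->
  (forall t, a <= t <= b -> d t <= k) -> f b - f a <= k * (b - a).
Proof. intros Hd Hab Hk. exact (IAF f a b k (derivable_of_lim f d Hd) Hab Hk). Qed.

Lemma increment_ge (f d : R -> R) (k a b : R) :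
  (forall t, derivable_pt_lim f t (d t)) -> a <= b ->
  (forall t, a <= t <= b -> k <= d t) -> k * (b - a) <= f b - f a.
Proof.
  intros Hd Hab Hk.
  enough (- f b - - f a <= - k * (b - a)) by lra.
  apply (increment_le (fun s => - f s) (fun s => - d s)); [| exact Hab |].
  - intro t. apply derivable_pt_lim_opp, Hd.
  - intros t Ht. specialize (Hk t Ht). lra.
Qed.

Lemma nondecreasing_of_nonneg_derivative (f d : R -> R) (a b : R) :
  (forall t, derivable_pt_lim f t (d t)) -> a <= b ->
  (forall t, a <= t <= b -> 0 <= d t) -> f a <= f b.
Proof.
  intros Hd Hab Hpos.
  enough (0 * (b - a) <= f b - f a) by lra.
  exact (increment_ge f d 0 a b Hd Hab Hpos).
Qed.

Lemma increment_abs_le (f d : R -> R) (M a b : R) :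
  (forall t, derivable_pt_lim f t (d t)) -> a <= b ->
  (forall t, - M <= d t <= M) -> Rabs (f b - f a) <= M * (b - a).
Proof.
  intros Hd Hab HM. apply Rabs_le. split.
  - enough ((- M) * (b - a) <= f b - f a) by lra.
    apply (increment_ge f d); [exact Hd | exact Hab |]. intros t _. apply HM.
  - apply (increment_le f d); [exact Hd | exact Hab |]. intros t _. apply HM.
Qed.

Lemma derivable_pt_lim_square (g : R -> R) (t l : R) :
  derivable_pt_lim g t l -> derivable_pt_lim (fun s => g s ^ 2) t (2 * g t * l).
Proof.
  intro Hg. apply (derivable_pt_lim_ext (mult_fct g g)); [intro s; unfold mult_fct; ring |].
  replace (2 * g t * l) with (l * g t + g t * l) by ring.
  apply derivable_pt_lim_mult; exact Hg.
Qed.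

(* A solution of g' = k g with k bounded below by -K never vanishes after a
   time where it is nonzero, since g^2 e^(2 K t) is nondecreasing. *)
Lemma linear_nonvanishing (g k : R -> R) (K t0 : R) :
  (forall t, derivable_pt_lim g t (k t * g t)) -> (forall t, - K <= k t) ->
  g t0 <> 0 -> forall t, t0 <= t -> g t <> 0.
Proof.
  intros Hg Hk Hg0 t Ht Hgt.
  set (h := fun s => g s ^ 2 * exp (2 * K * s)).
  assert (Hh : forall s, derivable_pt_lim h s (2 * (k s + K) * g s ^ 2 * exp (2 * K * s))).
  { intro s.
    apply (derivable_pt_lim_ext
             (mult_fct (fun s => g s ^ 2) (comp exp (mult_real_fct (2 * K) id))));
      [intro z; reflexivity |].
    replace (2 * (k s + K) * g s ^ 2 * exp (2 * K * s))
      with (2 * g s * (k s * g s) * exp (2 * K * s) + g s ^ 2 * (exp (2 * K * s) * (2 * K * 1)))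
      by ring.
    apply (derivable_pt_lim_mult (fun s => g s ^ 2) (comp exp (mult_real_fct (2 * K) id)));
      [apply derivable_pt_lim_square, Hg |].
    apply (derivable_pt_lim_comp (mult_real_fct (2 * K) id) exp);
      [apply derivable_pt_lim_scal, derivable_pt_lim_id | apply derivable_pt_lim_exp]. }
  assert (Hmono : h t0 <= h t).
  { apply (nondecreasing_of_nonneg_derivative h _ t0 t Hh Ht). intros s _.
    specialize (Hk s). pose proof (exp_pos (2 * K * s)).
    apply Rmult_le_pos; [| lra]. apply Rmult_le_pos; nra. }
  assert (0 < h t0).
  { unfold h. pose proof (exp_pos (2 * K * t0)). apply Rmult_lt_0_compat; [nra | lra]. }
  unfold h in Hmono at 2. rewrite Hgt in Hmono. lra.
Qed.

Definition tends_at_infty (g : R -> R) (l : R) : Prop :=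
  forall eps, 0 < eps -> exists T, forall t, T <= t -> Rabs (g t - l) < eps.

Lemma tends_along_sequence (g : R -> R) (l : R) (tn : nat -> R) :
  tends_at_infty g l -> cv_infty tn -> Un_cv (fun n => g (tn n)) l.
Proof.
  intros Hg Htn eps Heps. destruct (Hg eps Heps) as [T HT]. destruct (Htn T) as [N HN].
  exists N. intros n Hn. apply HT. left. apply HN. exact Hn.
Qed.

Lemma Un_cv_scal (k : R) (u : nat -> R) (l : R) :
  Un_cv u l -> Un_cv (fun n => k * u n) (k * l).
Proof.
  intro Hu. apply CV_mult; [| exact Hu].
  intros eps Heps. exists 0%nat. intros n _.
  unfold R_dist. rewrite Rminus_diag, Rabs_R0. exact Heps.
Qed.

Lemma tends_sq (g : R -> R) (l : R) :
  tends_at_infty g l -> tends_at_infty (fun t => g t ^ 2) (l ^ 2).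
Proof.
  intros Hg eps Heps.
  set (delta := Rmin 1 (eps / (2 * Rabs l + 1))).
  assert (Hl := Rabs_pos l).
  assert (Hdelta1 : delta <= 1) by apply Rmin_l.
  assert (Hdelta2 : delta * (2 * Rabs l + 1) <= eps).
  { assert (Hmin : delta <= eps / (2 * Rabs l + 1)) by apply Rmin_r.
    apply (Rmult_le_compat_r (2 * Rabs l + 1)) in Hmin; [| lra].
    unfold Rdiv in Hmin. rewrite Rmult_assoc, Rinv_l, Rmult_1_r in Hmin; lra. }
  assert (Hdelta : 0 < delta).
  { apply Rmin_glb_lt; [lra |]. apply Rdiv_lt_0_compat; lra. }
  destruct (Hg delta Hdelta) as [T HT]. exists T. intros t Ht. specialize (HT t Ht).
  replace (g t ^ 2 - l ^ 2) with ((g t - l) * ((g t - l) + 2 * l)) by ring.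
  rewrite Rabs_mult.
  assert (Htri := Rabs_triang (g t - l) (2 * l)).
  rewrite Rabs_mult, (Rabs_pos_eq 2) in Htri by lra.
  pose proof (Rabs_pos (g t - l)). pose proof (Rabs_pos (g t - l + 2 * l)).
  nra.
Qed.

Lemma nondecreasing_limit (F : R -> R) (tn : nat -> R) (l : R) :
  (forall a b, a <= b -> F a <= F b) -> cv_infty tn -> Un_cv (fun n => F (tn n)) l ->
  (forall t, F t <= l) /\ tends_at_infty F l.
Proof.
  intros Fmono Htn Hl.
  assert (Fle : forall t, F t <= l).
  { intro t. apply Rnot_lt_le. intro Hlt.
    destruct (Hl (F t - l)) as [N1 HN1]; [lra |].
    destruct (Htn t) as [N2 HN2].
    specialize (HN1 (max N1 N2) (Nat.le_max_l _ _)).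
    specialize (HN2 (max N1 N2) (Nat.le_max_r _ _)).
    apply Rabs_def2 in HN1.
    assert (F t <= F (tn (max N1 N2))) by (apply Fmono; lra). lra. }
  split; [exact Fle |]. intros eps Heps. destruct (Hl eps Heps) as [N HN].
  exists (tn N). intros t Ht. specialize (HN N (le_n _)). apply Rabs_def2 in HN.
  specialize (Fle t). assert (F (tn N) <= F t) by (apply Fmono; exact Ht).
  apply Rabs_def1; lra.
Qed.

(* Barbalat-type lemma: if F' = c G^2 with c > 0, F converges along a sequence
   tending to +infinity and G' is bounded, then G -> 0.  Otherwise G stays
   large on intervals of fixed length, on which F gains a fixed amount. *)
Lemma barbalat (F G dG : R -> R) (c M l : R) (tn : nat -> R) :
  (forall t, derivable_pt_lim F t (c * G t ^ 2)) -> 0 < c ->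
  (forall t, derivable_pt_lim G t (dG t)) -> (forall t, - M <= dG t <= M) ->
  cv_infty tn -> Un_cv (fun n => F (tn n)) l -> tends_at_infty G 0.
Proof.
  intros HF Hc HG HM Htn Hl.
  assert (Fmono : forall a b, a <= b -> F a <= F b).
  { intros a b Hab. apply (nondecreasing_of_nonneg_derivative F _ a b HF Hab). intros; nra. }
  destruct (nondecreasing_limit F tn l Fmono Htn Hl) as [Fle Ftends].
  assert (HM0 : 0 <= M) by (destruct (HM 0); lra).
  intros eps Heps.
  set (d := eps / (2 * (M + 1))).
  assert (Hd : 0 < d) by (apply Rdiv_lt_0_compat; lra).
  assert (HMd : M * d <= eps / 2).
  { unfold d. apply (Rmult_le_reg_r (2 * (M + 1))); [lra |]. field_simplify; nra. }
  set (k := c * (eps / 2) ^ 2 * d).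
  assert (Hk : 0 < k) by (unfold k; apply Rmult_lt_0_compat; [apply Rmult_lt_0_compat |]; nra).
  destruct (Ftends k Hk) as [T HT]. exists T. intros t Ht.
  rewrite Rminus_0_r. apply Rnot_le_lt. intro Hbig.
  assert (Hstay : forall u, t <= u <= t + d -> (eps / 2) ^ 2 <= G u ^ 2).
  { intros u Hu.
    assert (Hinc := increment_abs_le G dG M t u HG (proj1 Hu) HM).
    assert (M * (u - t) <= eps / 2) by nra.
    assert (Hrev := Rabs_triang_inv (G t) (G t - G u)).
    replace (G t - (G t - G u)) with (G u) in Hrev by ring.
    rewrite Rabs_minus_sym in Hinc.
    assert (eps / 2 <= Rabs (G u)) by lra.
    rewrite <- (pow2_abs (G u)). apply pow_incr. split; lra. }
  assert (Hgain : c * (eps / 2) ^ 2 * (t + d - t) <= F (t + d) - F t).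
  { apply (increment_ge F (fun s => c * G s ^ 2)); [exact HF | lra |].
    intros s Hs. apply Rmult_le_compat_l; [lra | exact (Hstay s Hs)]. }
  specialize (HT t Ht). apply Rabs_def2 in HT. specialize (Fle (t + d)).
  replace (t + d - t) with d in Hgain by ring. unfold k in HT. lra.
Qed.

(* If f^2 -> c^2 with c > 0 and f -> c along some sequence, then f is
   eventually positive: f cannot vanish late, hence by the intermediate value
   theorem it cannot change sign. *)
Lemma eventually_positive (f : R -> R) (c : R) (tn : nat -> R) :
  continuity f -> 0 < c -> tends_at_infty (fun t => f t ^ 2) (c ^ 2) ->
  cv_infty tn -> Un_cv (fun n => f (tn n)) c -> exists T, forall t, T <= t -> 0 < f t.
Proof.
  intros Hf Hc Hsq Htn Hl.
  destruct (Hsq (c ^ 2 / 2)) as [T1 HT1]; [nra |].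
  assert (Hnz : forall t, T1 <= t -> f t <> 0).
  { intros t Ht Hz. specialize (HT1 t Ht). rewrite Hz in HT1. apply Rabs_def2 in HT1. nra. }
  destruct (Htn T1) as [N1 HN1]. destruct (Hl (c / 2)) as [N2 HN2]; [lra |].
  set (n := max N1 N2).
  specialize (HN1 n (Nat.le_max_l _ _)). specialize (HN2 n (Nat.le_max_r _ _)).
  apply Rabs_def2 in HN2.
  exists (tn n). intros t Ht. apply Rnot_le_lt. intro Hneg.
  destruct (IVT_cor f (tn n) t Hf Ht) as [z [Hz Hfz]]; [nra |].
  apply (Hnz z); [lra | exact Hfz].
Qed.

(* Under the same hypotheses, f -> c, since |f - c| <= |f^2 - c^2| / c once f > 0. *)
Lemma tends_of_tends_sq_pos (f : R -> R) (c : R) (tn : nat -> R) :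
  continuity f -> 0 < c -> tends_at_infty (fun t => f t ^ 2) (c ^ 2) ->
  cv_infty tn -> Un_cv (fun n => f (tn n)) c -> tends_at_infty f c.
Proof.
  intros Hf Hc Hsq Htn Hl eps Heps.
  destruct (eventually_positive f c tn Hf Hc Hsq Htn Hl) as [T1 HT1].
  destruct (Hsq (eps * c)) as [T2 HT2]; [nra |].
  exists (Rmax T1 T2). intros t Ht.
  specialize (HT1 t (Rle_trans _ _ _ (Rmax_l _ _) Ht)).
  specialize (HT2 t (Rle_trans _ _ _ (Rmax_r _ _) Ht)). apply Rabs_def2 in HT2.
  apply Rabs_def1; nra.
Qed.

Lemma tends_of_tends_sq (f : R -> R) (c : R) (tn : nat -> R) :
  continuity f -> tends_at_infty (fun t => f t ^ 2) (c ^ 2) ->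
  cv_infty tn -> Un_cv (fun n => f (tn n)) c -> tends_at_infty f c.
Proof.
  intros Hf Hsq Htn Hl. destruct (Rtotal_order c 0) as [Hneg | [Hzero | Hc]].
  - assert (Hopp : tends_at_infty (fun t => - f t) (- c)).
    { apply (tends_of_tends_sq_pos (- f)%F (- c) tn (continuity_opp f Hf));
        [lra | | exact Htn | exact (CV_opp _ _ Hl)].
      intros eps Heps. destruct (Hsq eps Heps) as [T HT]. exists T. intros t Ht.
      unfold opp_fct. replace ((- f t) ^ 2 - (- c) ^ 2) with (f t ^ 2 - c ^ 2) by ring. auto. }
    intros eps Heps. destruct (Hopp eps Heps) as [T HT]. exists T. intros t Ht.
    rewrite <- Rabs_Ropp. replace (- (f t - c)) with (- f t - - c) by ring. auto.
  - subst c. intros eps Heps. destruct (Hsq (eps ^ 2)) as [T HT]; [nra |].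
    exists T. intros t Ht. specialize (HT t Ht).
    replace (f t ^ 2 - 0 ^ 2) with (Rabs (f t) ^ 2) in HT by (rewrite pow2_abs; ring).
    rewrite Rabs_pos_eq in HT by apply pow2_ge_0.
    rewrite Rminus_0_r. pose proof (Rabs_pos (f t)). nra.
  - exact (tends_of_tends_sq_pos f c tn Hf Hc Hsq Htn Hl).
Qed.

(* If g g' >= 0 from time T on, g^2 is nondecreasing there, so g cannot tend
   to 0 unless g(T) = 0. *)
Lemma not_tends_0_of_growing_square (g dg : R -> R) (T : R) :
  (forall t, derivable_pt_lim g t (dg t)) -> (forall t, T <= t -> 0 <= g t * dg t) ->
  g T <> 0 -> ~ tends_at_infty g 0.
Proof.
  intros Hd Hpos HT Hlim.
  destruct (Hlim (Rabs (g T))) as [T2 HT2]; [apply Rabs_pos_lt, HT |].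
  set (u := Rmax T T2).
  assert (Hgrow : g T ^ 2 <= g u ^ 2).
  { apply (nondecreasing_of_nonneg_derivative (fun s => g s ^ 2) (fun s => 2 * g s * dg s)).
    - intro t. apply derivable_pt_lim_square, Hd.
    - apply Rmax_l.
    - intros s Hs. specialize (Hpos s (proj1 Hs)). lra. }
  specialize (HT2 u (Rmax_r _ _)). rewrite Rminus_0_r in HT2.
  rewrite <- (pow2_abs (g T)), <- (pow2_abs (g u)) in Hgrow.
  pose proof (Rabs_pos (g u)). nra.
Qed.

Lemma sphere_coordinate_sq_tends (u v w z : R -> R) (a : R) :
  (forall t, u t ^ 2 + v t ^ 2 + w t ^ 2 + z t ^ 2 = 1) ->
  tends_at_infty u a -> tends_at_infty v 0 -> tends_at_infty w 0 ->
  tends_at_infty (fun t => z t ^ 2) (1 - a ^ 2).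
Proof.
  intros Hsph Hu Hv Hw eps Heps.
  destruct (tends_sq u a Hu (eps / 3)) as [T1 H1]; [lra |].
  destruct (tends_sq v 0 Hv (eps / 3)) as [T2 H2]; [lra |].
  destruct (tends_sq w 0 Hw (eps / 3)) as [T3 H3]; [lra |].
  exists (Rmax T1 (Rmax T2 T3)). intros t Ht.
  pose proof (Rmax_l T1 (Rmax T2 T3)). pose proof (Rmax_r T1 (Rmax T2 T3)).
  pose proof (Rmax_l T2 T3). pose proof (Rmax_r T2 T3).
  specialize (H1 t ltac:(lra)). specialize (H2 t ltac:(lra)). specialize (H3 t ltac:(lra)).
  apply Rabs_def2 in H1, H2, H3. specialize (Hsph t).
  apply Rabs_def1; simpl in *; lra.
Qed.

Lemma sqrt3_sq : sqrt 3 * sqrt 3 = 3.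
Proof. apply sqrt_sqrt. lra. Qed.

Lemma sqrt3_bounds : 0 < sqrt 3 < 2.
Proof.
  assert (Hpos : 0 < sqrt 3) by (apply sqrt_lt_R0; lra).
  split; [exact Hpos |]. pose proof sqrt3_sq. nra.
Qed.

Lemma omega_arc_of_limit_conditions (p : state) :
  SA p = 0 -> SC p = 0 -> Sp p ^ 2 + SB p ^ 2 = 1 ->
  SB p <= 0 -> 0 <= 3 * Sp p + sqrt 3 * SB p -> omega_arc p.
Proof.
  intros HA HC Hcirc Hs Hk.
  pose proof sqrt3_sq. pose proof sqrt3_bounds.
  assert (HL : 0 <= Sp p) by nra.
  assert (H9 : 3 * SB p ^ 2 <= 9 * Sp p ^ 2).
  { replace (3 * SB p ^ 2) with ((sqrt 3 * SB p) ^ 2)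
      by (rewrite Rpow_mult_distr, pow2_sqrt; lra).
    assert (0 <= - (sqrt 3 * SB p)) by nra.
    assert (0 <= (3 * Sp p + sqrt 3 * SB p) * (3 * Sp p - sqrt 3 * SB p))
      by (apply Rmult_le_pos; lra).
    nra. }
  unfold omega_arc. repeat split; try assumption; nra.
Qed.

Section OmegaLimitSet.

Variable x : R -> state.
Hypothesis Hx : is_solution x.

Let P (t : R) : R := Sp (x t).
Let A (t : R) : R := SA (x t).
Let B (t : R) : R := SB (x t).
Let C (t : R) : R := SC (x t).

Lemma kasner_sphere (t : R) : P t ^ 2 + A t ^ 2 + B t ^ 2 + C t ^ 2 = 1.
Proof. exact (proj1 Hx t). Qed.

Lemma kasner_bounds (t : R) :
  -1 <= P t <= 1 /\ -1 <= A t <= 1 /\ -1 <= B t <= 1 /\ -1 <= C t <= 1.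
Proof. pose proof (kasner_sphere t). repeat split; nra. Qed.

Lemma Sp_derivative (t : R) : derivable_pt_lim P t (3 * A t ^ 2).
Proof. exact (proj1 (proj2 Hx) t). Qed.

Lemma SA_derivative (t : R) : derivable_pt_lim A t (- (3 * P t + sqrt 3 * B t) * A t).
Proof. exact (proj1 (proj2 (proj2 Hx)) t). Qed.

Lemma SB_derivative (t : R) : derivable_pt_lim B t (sqrt 3 * A t ^ 2 - 2 * sqrt 3 * C t ^ 2).
Proof. exact (proj1 (proj2 (proj2 (proj2 Hx))) t). Qed.

Lemma SC_derivative (t : R) : derivable_pt_lim C t (2 * sqrt 3 * B t * C t).
Proof. exact (proj2 (proj2 (proj2 (proj2 Hx))) t). Qed.

(* Sigma_A and Sigma_C solve linear equations with bounded coefficients, so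
   they do not vanish after t0. *)
Lemma SA_nonzero_forward (t0 : R) : A t0 <> 0 -> forall t, t0 <= t -> A t <> 0.
Proof.
  apply (linear_nonvanishing A (fun t => - (3 * P t + sqrt 3 * B t)) 5 t0 SA_derivative).
  intro t. destruct (kasner_bounds t) as [HP [_ [HB _]]]. pose proof sqrt3_bounds. nra.
Qed.

Lemma SC_nonzero_forward (t0 : R) : C t0 <> 0 -> forall t, t0 <= t -> C t <> 0.
Proof.
  apply (linear_nonvanishing C (fun t => 2 * sqrt 3 * B t) 4 t0).
  - exact SC_derivative.
  - intro t. destruct (kasner_bounds t) as [_ [_ [HB _]]]. pose proof sqrt3_bounds. nra.
Qed.

Variable tn : nat -> R.
Variable p : state.
Hypothesis Htn : cv_infty tn.
Hypothesis Hp : state_cv (fun n => x (tn n)) p.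

(* Sigma_+ is nondecreasing, hence converges to Sigma_+(p) from below. *)
Lemma Sp_tends : (forall t, P t <= Sp p) /\ tends_at_infty P (Sp p).
Proof.
  apply (nondecreasing_limit P tn (Sp p)); [| exact Htn | exact (proj1 Hp)].
  intros a b Hab. apply (nondecreasing_of_nonneg_derivative P _ a b Sp_derivative Hab).
  intros t _. nra.
Qed.

(* Sigma_+' = 3 Sigma_A^2, so Sigma_A -> 0 by the Barbalat-type lemma. *)
Lemma SA_tends_0 : tends_at_infty A 0.
Proof.
  apply (barbalat P A _ 3 5 (Sp p) tn Sp_derivative ltac:(lra) SA_derivative);
    [| exact Htn | exact (proj1 Hp)].
  intro t. destruct (kasner_bounds t) as [HP [HA [HB _]]]. pose proof sqrt3_bounds.
  assert (-5 <= 3 * P t + sqrt 3 * B t <= 5) by (split; nra). split; nra.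
Qed.

(* (Sigma_+ - sqrt 3 Sigma_B)' = 6 Sigma_C^2, so likewise Sigma_C -> 0. *)
Lemma SC_tends_0 : tends_at_infty C 0.
Proof.
  apply (barbalat (fun t => P t - sqrt 3 * B t) C (fun t => 2 * sqrt 3 * B t * C t)
                  6 4 (Sp p - sqrt 3 * SB p) tn);
    [| lra | exact SC_derivative | | exact Htn |].
  - intro t. replace (6 * C t ^ 2)
      with (3 * A t ^ 2 - sqrt 3 * (sqrt 3 * A t ^ 2 - 2 * sqrt 3 * C t ^ 2))
      by (replace (sqrt 3 * (sqrt 3 * A t ^ 2 - 2 * sqrt 3 * C t ^ 2))
            with (sqrt 3 * sqrt 3 * (A t ^ 2 - 2 * C t ^ 2)) by ring;
          rewrite sqrt3_sq; ring).
    apply (derivable_pt_lim_minus P (mult_real_fct (sqrt 3) B)).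
    + apply Sp_derivative.
    + apply derivable_pt_lim_scal, SB_derivative.
  - intro t. destruct (kasner_bounds t) as [_ [_ [HB HC]]]. pose proof sqrt3_bounds.
    assert (-2 <= sqrt 3 * B t <= 2) by (split; nra). split; nra.
  - destruct Hp as [HP [_ [HB _]]]. apply CV_minus; [exact HP | exact (Un_cv_scal _ _ _ HB)].
Qed.

Lemma SB_sq_tends : tends_at_infty (fun t => B t ^ 2) (1 - Sp p ^ 2).
Proof.
  apply (sphere_coordinate_sq_tends P A C B (Sp p)); [| exact (proj2 Sp_tends) | exact SA_tends_0
                                                         | exact SC_tends_0].
  intro t. pose proof (kasner_sphere t). lra.
Qed.

Lemma omega_limit_coordinates : SA p = 0 /\ SC p = 0 /\ Sp p ^ 2 + SB p ^ 2 = 1.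
Proof.
  destruct Hp as [_ [HA [HB HC]]].
  split; [| split].
  - exact (UL_sequence _ _ _ HA (tends_along_sequence A 0 tn SA_tends_0 Htn)).
  - exact (UL_sequence _ _ _ HC (tends_along_sequence C 0 tn SC_tends_0 Htn)).
  - assert (Hsq : Un_cv (fun n => B (tn n) ^ 2) (SB p ^ 2)).
    { apply (Un_cv_ext (fun n => B (tn n) * B (tn n))); [intro n; ring |].
      replace (SB p ^ 2) with (SB p * SB p) by ring. exact (CV_mult _ _ _ _ HB HB). }
    assert (E := UL_sequence _ _ _ Hsq (tends_along_sequence _ _ tn SB_sq_tends Htn)). lra.
Qed.

Lemma SB_tends : tends_at_infty B (SB p).
Proof.
  apply (tends_of_tends_sq B (SB p) tn); [| | exact Htn | exact (proj1 (proj2 (proj2 Hp)))].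
  - exact (fun t => derivable_continuous_pt B t (derivable_of_lim B _ SB_derivative t)).
  - replace (SB p ^ 2) with (1 - Sp p ^ 2) by (pose proof omega_limit_coordinates; lra).
    exact SB_sq_tends.
Qed.

Variable t0 : R.
Hypothesis HA0 : A t0 <> 0.
Hypothesis HC0 : C t0 <> 0.

(* If Sigma_B(p) > 0, then eventually (Sigma_C^2)' = 4 sqrt 3 Sigma_B Sigma_C^2 >= 0,
   contradicting Sigma_C -> 0. *)
Lemma SB_limit_nonpos : SB p <= 0.
Proof.
  apply Rnot_lt_le. intro Hpos.
  destruct (SB_tends (SB p) Hpos) as [T HT].
  apply (not_tends_0_of_growing_square C _ (Rmax T t0) SC_derivative); [| | exact SC_tends_0].
  - intros t Ht. specialize (HT t (Rle_trans _ _ _ (Rmax_l _ _) Ht)). apply Rabs_def2 in HT.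
    pose proof sqrt3_bounds. pose proof (pow2_ge_0 (C t)).
    replace (C t * (2 * sqrt 3 * B t * C t)) with (2 * sqrt 3 * B t * C t ^ 2) by ring.
    apply Rmult_le_pos; [nra | lra].
  - exact (SC_nonzero_forward t0 HC0 _ (Rmax_r _ _)).
Qed.

(* If 3 Sigma_+(p) + sqrt 3 Sigma_B(p) < 0, then eventually
   (Sigma_A^2)' = -2 (3 Sigma_+ + sqrt 3 Sigma_B) Sigma_A^2 >= 0, contradicting
   Sigma_A -> 0. *)
Lemma kasner_limit_condition : 0 <= 3 * Sp p + sqrt 3 * SB p.
Proof.
  apply Rnot_lt_le. intro Hneg.
  set (eta := - (3 * Sp p + sqrt 3 * SB p) / 2).
  assert (Heta : 0 < eta) by (unfold eta; lra).
  destruct (SB_tends (eta / 2)) as [T HT]; [lra |].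
  apply (not_tends_0_of_growing_square A _ (Rmax T t0) SA_derivative); [| | exact SA_tends_0].
  - intros t Ht. specialize (HT t (Rle_trans _ _ _ (Rmax_l _ _) Ht)). apply Rabs_def2 in HT.
    pose proof sqrt3_bounds. pose proof (pow2_ge_0 (A t)). pose proof (proj1 Sp_tends t).
    assert (3 * P t + sqrt 3 * B t <= 0) by (unfold eta in HT; nra).
    replace (A t * (- (3 * P t + sqrt 3 * B t) * A t))
      with (- (3 * P t + sqrt 3 * B t) * A t ^ 2) by ring.
    apply Rmult_le_pos; lra.
  - exact (SA_nonzero_forward t0 HA0 _ (Rmax_r _ _)).
Qed.

Lemma omega_limit_in_arc : omega_arc p.
Proof.
  destruct omega_limit_coordinates as [HA [HC Hcirc]].
  exact (omega_arc_of_limit_conditions p HA HC Hcirc SB_limit_nonpos kasner_limit_condition).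
Qed.

End OmegaLimitSet.

Definition time_reversal (x : R -> state) : R -> state :=
  fun t => mkState (- Sp (x (- t))) (SA (x (- t))) (- SB (x (- t))) (SC (x (- t))).

Definition reflection (p : state) : state := mkState (- Sp p) (SA p) (- SB p) (SC p).

Lemma reversed_derivative (f : R -> R) (t l l' : R) :
  derivable_pt_lim f (- t) l -> l' = - l -> derivable_pt_lim (fun s => f (- s)) t l'.
Proof.
  intros Hf ->. apply (derivable_pt_lim_mirr_fwd f). rewrite Ropp_involutive. exact Hf.
Qed.

Lemma reversed_opp_derivative (f : R -> R) (t l l' : R) :
  derivable_pt_lim f (- t) l -> l' = l -> derivable_pt_lim (fun s => - f (- s)) t l'.
Proof.
  intros Hf ->. apply (derivable_pt_lim_opp_fwd (fun s => f (- s))).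
  exact (reversed_derivative f t l (- l) Hf eq_refl).
Qed.

Lemma time_reversal_solution (x : R -> state) :
  is_solution x -> is_solution (time_reversal x).
Proof.
  intros [Hs [HP [HA [HB HC]]]].
  unfold is_solution, time_reversal, on_sphere; cbn [Sp SA SB SC kasner_field].
  split; [| split; [| split; [| split]]]; intro t.
  - pose proof (Hs (- t)) as H. unfold on_sphere in H. lra.
  - apply (reversed_opp_derivative _ _ _ _ (HP (- t))). reflexivity.
  - apply (reversed_derivative _ _ _ _ (HA (- t))). cbn. ring.
  - apply (reversed_opp_derivative _ _ _ _ (HB (- t))). reflexivity.
  - apply (reversed_derivative _ _ _ _ (HC (- t))). cbn. ring.
Qed.

Lemma alpha_limit_time_reversal (x : R -> state) (p : state) :
  alpha_limit x p -> omega_limit (time_reversal x) (reflection p).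
Proof.
  intros [tn [Htn [HP [HA [HB HC]]]]].
  exists (fun n => - tn n). split; [exact Htn |].
  unfold state_cv, time_reversal, reflection; cbn [Sp SA SB SC]. repeat split.
  - apply (Un_cv_ext (fun n => - Sp (x (tn n)))); [intro n; now rewrite Ropp_involutive |].
    exact (CV_opp _ _ HP).
  - apply (Un_cv_ext (fun n => SA (x (tn n)))); [intro n; now rewrite Ropp_involutive | exact HA].
  - apply (Un_cv_ext (fun n => - SB (x (tn n)))); [intro n; now rewrite Ropp_involutive |].
    exact (CV_opp _ _ HB).
  - apply (Un_cv_ext (fun n => SC (x (tn n)))); [intro n; now rewrite Ropp_involutive | exact HC].
Qed.

Lemma alpha_arc_of_reflection (p : state) : omega_arc (reflection p) -> alpha_arc p.
Proof. unfold omega_arc, alpha_arc, reflection; cbn [Sp SA SB SC]. intros; repeat split; lra. Qed.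

Lemma omega_limit_set_in_arc (x : R -> state) (t0 : R) :
  is_solution x -> SA (x t0) <> 0 -> SC (x t0) <> 0 ->
  forall p, omega_limit x p -> omega_arc p.
Proof. intros Hx HA HC p [tn [Htn Hp]]. exact (omega_limit_in_arc x Hx tn p Htn Hp t0 HA HC). Qed.

Theorem mainTheorem5 (x : R -> state) (t0 : R) :
  is_solution x ->
  SA (x t0) * SC (x t0) <> 0 ->
  (forall p, alpha_limit x p -> alpha_arc p) /\
  (forall p, omega_limit x p -> omega_arc p).
Proof.
  intros Hx Hprod.
  assert (HA : SA (x t0) <> 0) by (intro E; apply Hprod; rewrite E; ring).
  assert (HC : SC (x t0) <> 0) by (intro E; apply Hprod; rewrite E; ring).
  split.
  - intros p Hp. apply alpha_arc_of_reflection.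
    apply (omega_limit_set_in_arc (time_reversal x) (- t0) (time_reversal_solution x Hx));
      [| | exact (alpha_limit_time_reversal x p Hp)];
      unfold time_reversal; cbn [SA SC]; rewrite Ropp_involutive; assumption.
  - exact (omega_limit_set_in_arc x t0 Hx HA HC).
Qed.
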